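(* Suppose $A,B,C\subset\mathcal R$ are adjacent zones in that order (i.e. $A$ and $B$ are adjacent, $B$ and $C$ are adjacent, and $B$ lies between $A$ and $C$), and that $A$ and $C$ are closed. Then $A\cup B\cup C$ is closed.
   Context: Let $\mathcal R$ be the set of germs at $0$ of analytic arcs $\{x=\alpha(y),\ y\ge 0\}$ in the closed upper half-plane of $\mathbb R^2$, where $\alpha$ is given by a convergent Puiseux series with positive rational exponents. The order $\mathcal O(\gamma)$ of a Puiseux series is the smallest exponent with nonzero coefficient ($\mathcal O(0)=+\infty$). Write $\alpha<\beta$ if $\alpha(y)<\beta(y)$ for all sufficiently small $y>0$. A subset $A\subset\mathcal R$ is a zone (connected) if $\alpha,\beta\in A$, $\alpha<\gamma<\beta$, $\gamma\in\mathcal R$ imply $\gamma\in A$. Distance $d(\alpha,\beta)=1/\mathcal O(\alpha-\beta)$ (with $1/\infty=0$); width $w(A)=\sup\{d(\alpha,\beta):\alpha,\beta\in A\}$. A zone is closed if there exist $\alpha,\beta\in A$ with $d(\alpha,\beta)=w(A)$, and open otherwise. Two zones $A,B$ are adjacent if $A\cup B$ is connected and $A\cap B=\emptyset$. *)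

From Stdlib Require Import Reals Lra ClassicalEpsilon.
From Coquelicot Require Import Coquelicot.
Open Scope R_scope.

Definition expo (n k : nat) : R := INR (S k) / INR (S n).

(* A representation of a convergent Puiseux series with positive rational
   exponents:  alpha(y) = sum_{k>=0} coef k * y^((k+1)/(den+1)),
   absolutely convergent for some radius rho > 0. *)
Record arc := mkArc {
  den : nat;
  coef : nat -> R;
  conv : exists rho, 0 < rho /\
           ex_series (fun k => Rabs (coef k) * Rpower rho (expo den k))
}.

Definition eval (a : arc) (y : R) : R :=
  Series (fun k => coef a k * Rpower y (expo (den a) k)).

Definition germ_eq (a b : arc) : Prop :=
  exists eps, 0 < eps /\ forall y, 0 < y < eps -> eval a y = eval b y.

(* a predicate on representations that is a set of germs *)
Definition saturated (A : arc -> Prop) : Prop :=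
  forall a b, germ_eq a b -> A a -> A b.

Definition coef_at (a : arc) (r : R) : R :=
  match excluded_middle_informative (exists k, r = expo (den a) k) with
  | left H => coef a (proj1_sig (constructive_indefinite_description _ H))
  | right _ => 0
  end.

Definition ord_is (a b : arc) (r : R) : Prop :=
  coef_at a r - coef_at b r <> 0 /\
  forall s, s < r -> coef_at a s - coef_at b s = 0.

(* d(a,b) = 1 / O(a - b), with 1/oo = 0 *)
Definition dist (a b : arc) : R :=
  match excluded_middle_informative (exists r, ord_is a b r) with
  | left H => / proj1_sig (constructive_indefinite_description _ H)
  | right _ => 0
  end.

Definition arc_lt (a b : arc) : Prop :=
  exists eps, 0 < eps /\ forall y, 0 < y < eps -> eval a y < eval b y.

Definition zone (A : arc -> Prop) : Prop :=
  forall a b g, A a -> A b -> arc_lt a g -> arc_lt g b -> A g.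

Definition width (A : arc -> Prop) : Rbar :=
  Lub_Rbar (fun d => exists a b, A a /\ A b /\ d = dist a b).

Definition closed_zone (A : arc -> Prop) : Prop :=
  exists a b, A a /\ A b /\ width A = Finite (dist a b).

Definition adjacent (A B : arc -> Prop) : Prop :=
  zone (fun g => A g \/ B g) /\ (forall g, A g -> B g -> False).

Definition between (A B C : arc -> Prop) : Prop :=
  forall a b c, A a -> B b -> C c -> arc_lt a b /\ arc_lt b c.

(* The distance is an ultrametric, and near 0 the sign of a - b is the sign of
   its leading coefficient.  Hence an arc x strictly between a and c is no
   closer to a than c is: otherwise a and c would agree beyond the order of
   x - a, and x would lie on the same side of both.  Fixing a in A and c in C,
   every arc of A, B or C is then within max (w(A), w(C), d(a, c)) of a, so by
   the ultrametric inequality this maximum is the width of A ∪ B ∪ C, and it is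
   attained because each of its three candidates is. *)
From Pilot Require Import Defs.
From Stdlib Require Import Reals.
From Coquelicot Require Import Coquelicot.
From Stdlib Require Import Lra Lia Classical ClassicalEpsilon.
From Stdlib Require Wf_nat.
Open Scope R_scope.

Definition lat (N j : nat) : R := INR j / INR N.

Lemma lat_lt N j j' : (0 < N)%nat -> (j < j')%nat -> lat N j < lat N j'.
Proof.
  intros HN Hj. unfold lat. apply Rmult_lt_compat_r.
  - apply Rinv_0_lt_compat, lt_0_INR; lia.
  - apply lt_INR; lia.
Qed.

Lemma lat_lt_inv N j j' : (0 < N)%nat -> lat N j < lat N j' -> (j < j')%nat.
Proof.
  intros HN H. destruct (Nat.lt_ge_cases j j') as [|Hj]; auto.
  destruct (Nat.eq_dec j j') as [->|]; [lra|].
  pose proof (lat_lt N j' j HN ltac:(lia)). lra.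
Qed.

Lemma lat_inj N j j' : (0 < N)%nat -> lat N j = lat N j' -> j = j'.
Proof.
  intros HN H. destruct (Nat.lt_total j j') as [h|[h|h]]; auto.
  - pose proof (lat_lt N j j' HN h). lra.
  - pose proof (lat_lt N j' j HN h). lra.
Qed.

Lemma lat_gt0 N j : (0 < N)%nat -> (0 < j)%nat -> 0 < lat N j.
Proof. intros. unfold lat. apply Rdiv_lt_0_compat; apply lt_0_INR; lia. Qed.

Lemma expo_gt0 n k : 0 < expo n k.
Proof. unfold expo. apply Rdiv_lt_0_compat; apply lt_0_INR; lia. Qed.

Lemma expo_lat n Q N k : (0 < Q)%nat -> N = (S n * Q)%nat ->
  expo n k = lat N (S k * Q).
Proof.
  intros HQ ->. unfold expo, lat. rewrite !mult_INR.
  assert (0 < INR (S n)) by (apply lt_0_INR; lia).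
  assert (0 < INR Q) by (apply lt_0_INR; lia).
  field. lra.
Qed.

Lemma lat_lt_expo_div n Q J : (0 < Q)%nat -> lat (S n * Q) J < expo n (J / Q).
Proof.
  intros HQ. rewrite (expo_lat n Q _ _ HQ eq_refl). apply lat_lt; [lia|].
  pose proof (Nat.div_mod_eq J Q). pose proof (Nat.mod_upper_bound J Q ltac:(lia)). nia.
Qed.

Lemma expo_inj n k k' : expo n k = expo n k' -> k = k'.
Proof.
  rewrite !(expo_lat n 1 _ _ ltac:(lia) eq_refl). intro H.
  apply lat_inj in H; lia.
Qed.

Lemma expo_le n k k' : (k <= k')%nat -> expo n k <= expo n k'.
Proof.
  intros. unfold expo. apply Rmult_le_compat_r.
  - left; apply Rinv_0_lt_compat, lt_0_INR; lia.
  - apply le_INR; lia.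
Qed.

Lemma coef_at_expo w k : coef_at w (expo (den w) k) = coef w k.
Proof.
  unfold coef_at. destruct excluded_middle_informative as [H|H].
  - destruct constructive_indefinite_description as [k' Hk']; simpl.
    apply expo_inj in Hk'. now subst.
  - exfalso. apply H. eauto.
Qed.

Lemma coef_at_not_expo w r : (forall k, r <> expo (den w) k) -> coef_at w r = 0.
Proof.
  intro H. unfold coef_at. destruct excluded_middle_informative as [[k Hk]|]; auto.
  exfalso; exact (H k Hk).
Qed.

Lemma coef_at_lat_nonmultiple w Q N j : (0 < Q)%nat -> N = (S (den w) * Q)%nat ->
  (j mod Q <> 0)%nat -> coef_at w (lat N j) = 0.
Proof.
  intros HQ HN Hj. apply coef_at_not_expo. intros k Hk.
  rewrite (expo_lat _ Q N k HQ HN) in Hk. apply lat_inj in Hk; [|lia].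
  subst j. apply Hj, Nat.Div0.mod_mul.
Qed.

Lemma coef_at_diff_lat a b s : coef_at a s - coef_at b s <> 0 ->
  exists j, (0 < j)%nat /\ s = lat (S (den a) * S (den b)) j.
Proof.
  intro H.
  assert (Hexpo : forall w, coef_at w s <> 0 -> exists k, s = expo (den w) k).
  { intros w Hw. apply NNPP. intro Hn. apply Hw, coef_at_not_expo.
    intros k ->. apply Hn. eauto. }
  destruct (Req_dec (coef_at a s) 0) as [Ha|Ha].
  - destruct (Hexpo b ltac:(lra)) as [k ->].
    exists (S k * S (den a))%nat. split; [lia|].
    apply expo_lat; lia.
  - destruct (Hexpo a Ha) as [k ->].
    exists (S k * S (den b))%nat. split; [lia|]. apply expo_lat; lia.
Qed.

Lemma ord_is_gt0 a b r : ord_is a b r -> 0 < r.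
Proof.
  intros [H _]. destruct (coef_at_diff_lat a b r H) as [j [Hj ->]].
  apply lat_gt0; lia.
Qed.

Lemma ord_is_unique a b r r' : ord_is a b r -> ord_is a b r' -> r = r'.
Proof.
  intros [H1 H2] [H3 H4]. destruct (Rtotal_order r r') as [h|[h|h]]; auto.
  - exfalso; apply H1, H4, h.
  - exfalso; apply H3, H2, h.
Qed.

Lemma ord_is_sym a b r : ord_is a b r -> ord_is b a r.
Proof. intros [H1 H2]. split; [lra|]. intros s Hs. specialize (H2 s Hs). lra. Qed.

Lemma ord_is_le a b r s : ord_is a b r -> coef_at a s - coef_at b s <> 0 -> r <= s.
Proof.
  intros [_ H] Hs. destruct (Rle_lt_dec r s); auto. exfalso; apply Hs, H; auto.
Qed.

(* The nonzero coefficients of [a - b] lie in the discrete set [lat N _],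
   [N = (den a + 1) (den b + 1)], so there is a first one. *)
Lemma ord_is_exists a b s : coef_at a s - coef_at b s <> 0 -> exists r, ord_is a b r.
Proof.
  intro H. apply NNPP. intro Hn.
  set (N := (S (den a) * S (den b))%nat).
  assert (Hzero : forall j, coef_at a (lat N j) - coef_at b (lat N j) = 0).
  { intro j. induction j as [j IH] using (well_founded_induction Wf_nat.lt_wf).
    apply NNPP. intro Hj. apply Hn. exists (lat N j). split; auto.
    intros s' Hs'. apply NNPP. intro Hs2.
    destruct (coef_at_diff_lat a b s' Hs2) as [j' [_ ->]].
    apply Hs2, IH, (lat_lt_inv N); [unfold N; lia | exact Hs']. }
  destruct (coef_at_diff_lat a b s H) as [j [_ ->]]. apply H, Hzero.
Qed.

Lemma dist_ord a b r : ord_is a b r -> Defs.dist a b = / r.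
Proof.
  intro H. unfold Defs.dist. destruct excluded_middle_informative as [E|E].
  - destruct constructive_indefinite_description as [r' Hr']; simpl.
    now rewrite (ord_is_unique _ _ _ _ Hr' H).
  - exfalso; apply E; eauto.
Qed.

Lemma dist_no_ord a b : ~ (exists r, ord_is a b r) -> Defs.dist a b = 0.
Proof.
  intro H. unfold Defs.dist. destruct excluded_middle_informative; [contradiction|auto].
Qed.

Lemma dist_ge0 a b : 0 <= Defs.dist a b.
Proof.
  destruct (classic (exists r, ord_is a b r)) as [[r H]|H].
  - rewrite (dist_ord _ _ _ H). left; apply Rinv_0_lt_compat, (ord_is_gt0 _ _ _ H).
  - rewrite dist_no_ord; auto; lra.
Qed.

Lemma dist_sym a b : Defs.dist a b = Defs.dist b a.
Proof.
  destruct (classic (exists r, ord_is a b r)) as [[r H]|H].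
  - now rewrite (dist_ord _ _ _ H), (dist_ord _ _ _ (ord_is_sym _ _ _ H)).
  - rewrite (dist_no_ord a b H), dist_no_ord; auto.
    intros [r Hr]; apply H; exists r; apply ord_is_sym, Hr.
Qed.

Lemma dist_ge_of_coef a b s : 0 < s -> coef_at a s - coef_at b s <> 0 ->
  / s <= Defs.dist a b.
Proof.
  intros Hs H. destruct (ord_is_exists _ _ _ H) as [p Hp].
  rewrite (dist_ord _ _ _ Hp). apply Rinv_le_contravar; [|exact (ord_is_le _ _ _ _ Hp H)].
  exact (ord_is_gt0 _ _ _ Hp).
Qed.

Lemma dist_ultra a b c : Defs.dist a c <= Rmax (Defs.dist a b) (Defs.dist b c).
Proof.
  destruct (classic (exists r, ord_is a c r)) as [[r H]|H].
  - rewrite (dist_ord _ _ _ H). pose proof (ord_is_gt0 _ _ _ H) as Hr.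
    destruct H as [H _].
    destruct (Req_dec (coef_at a r - coef_at b r) 0) as [E|E].
    + assert (Ebc : coef_at b r - coef_at c r <> 0) by (intro; apply H; lra).
      pose proof (dist_ge_of_coef b c r Hr Ebc). pose proof (Rmax_r (Defs.dist a b) (Defs.dist b c)). lra.
    + pose proof (dist_ge_of_coef a b r Hr E). pose proof (Rmax_l (Defs.dist a b) (Defs.dist b c)). lra.
  - rewrite dist_no_ord; auto. eapply Rle_trans; [apply dist_ge0|apply Rmax_l].
Qed.

Lemma coef_at_eq_of_dist_lt a c r s : 0 < r -> Defs.dist a c < / r -> s <= r ->
  coef_at a s = coef_at c s.
Proof.
  intros Hr Hd Hs. apply NNPP. intro H.
  assert (H' : coef_at a s - coef_at c s <> 0) by (intro; apply H; lra).
  assert (Hs0 : 0 < s).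
  { destruct (ord_is_exists a c s H') as [p Hp].
    pose proof (ord_is_gt0 _ _ _ Hp). pose proof (ord_is_le _ _ _ _ Hp H'). lra. }
  pose proof (dist_ge_of_coef a c s Hs0 H').
  pose proof (Rinv_le_contravar s r Hs0 Hs). lra.
Qed.

Lemma Rpower_gt0 y e : 0 < Rpower y e.
Proof. apply exp_pos. Qed.

Lemma exp_le_compat x y : x <= y -> exp x <= exp y.
Proof. intros [H| ->]; [left; apply exp_increasing, H | lra]. Qed.

Lemma Rle_Rpower_le1 y a b : 0 < y <= 1 -> a <= b -> Rpower y b <= Rpower y a.
Proof.
  intros Hy Hab. unfold Rpower. apply exp_le_compat.
  assert (ln y <= 0) by (rewrite <- ln_1; apply ln_le; lra). nra.
Qed.

Lemma Rpower_scaled_le y rho e0 e : 0 < y <= rho -> e0 <= e ->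
  Rpower y e * Rpower rho e0 <= Rpower rho e * Rpower y e0.
Proof.
  intros Hy He. unfold Rpower. rewrite <- !exp_plus. apply exp_le_compat.
  assert (ln y <= ln rho) by (apply ln_le; lra). nra.
Qed.

Lemma Rpower_small t M c : 0 < t -> 0 <= M -> 0 < c ->
  exists e, 0 < e /\ forall y, 0 < y < e -> M * Rpower y t < c.
Proof.
  intros Ht HM Hc. set (c' := c / (M + 1)).
  assert (Hc' : 0 < c') by (apply Rdiv_lt_0_compat; lra).
  exists (Rpower c' (/ t)). split; [apply Rpower_gt0|]. intros y Hy.
  assert (Hyt : Rpower y t < c').
  { rewrite <- (Rpower_1 c' Hc'), <- (Rinv_l t), <- Rpower_mult by lra.
    apply Rlt_Rpower_l; lra. }
  pose proof (Rpower_gt0 y t).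
  assert (c = (M + 1) * c') by (unfold c'; field; lra). nra.
Qed.

Fixpoint psum (f : nat -> R) (n : nat) : R :=
  match n with O => 0 | S n => psum f n + f n end.

Lemma psum_ext f g n : (forall k, (k < n)%nat -> f k = g k) -> psum f n = psum g n.
Proof.
  induction n as [|n IH]; intros H; simpl; auto.
  rewrite IH, H; auto.
Qed.

Lemma Series_split_psum a K : ex_series a ->
  Series a = psum a K + Series (fun k => a (K + k)%nat).
Proof.
  intro H. destruct K as [|K].
  - simpl. rewrite Rplus_0_l. now apply Series_ext.
  - rewrite (Series_incr_n a (S K)) by (lia || auto). f_equal. simpl.
    induction K as [|K IH]; simpl in *; lra.
Qed.

Lemma Series_ge0 a : (forall k, 0 <= a k) -> ex_series a -> 0 <= Series a.
Proof.
  intros Ha Hs. replace 0 with (0 * Series a) by ring. rewrite <- Series_scal_l.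
  apply Series_le; auto. intro k. rewrite Rmult_0_l. auto with real.
Qed.

Definition term (w : arc) (y : R) (k : nat) : R := coef w k * Rpower y (expo (den w) k).

Lemma Rabs_term_le w rho y k : 0 < y <= rho ->
  Rabs (term w y k) <= Rabs (coef w k) * Rpower rho (expo (den w) k).
Proof.
  intros Hy. unfold term.
  rewrite Rabs_mult, (Rabs_pos_eq (Rpower y _)) by (left; apply Rpower_gt0).
  apply Rmult_le_compat_l; [apply Rabs_pos|].
  apply Rle_Rpower_l; [left; apply expo_gt0|lra].
Qed.

Lemma ex_series_Rabs_term w rho y :
  ex_series (fun k => Rabs (coef w k) * Rpower rho (expo (den w) k)) -> 0 < y <= rho ->
  ex_series (fun k => Rabs (term w y k)).
Proof.
  intros Hs Hy. refine (ex_series_le _ _ _ Hs).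
  intro k. change (Rabs (Rabs (term w y k)) <= Rabs (coef w k) * Rpower rho (expo (den w) k)).
  rewrite Rabs_Rabsolu. now apply Rabs_term_le.
Qed.

(* The tail beyond [K] is dominated termwise by the convergent series at [rho],
   rescaled by [(y / rho) ^ expo K]. *)
Lemma eval_sub_psum_bound w : exists rho, 0 < rho /\ forall K, exists M, 0 <= M /\
  forall y, 0 < y <= rho ->
  Rabs (eval w y - psum (term w y) K) <= M * Rpower y (expo (den w) K).
Proof.
  destruct (conv w) as [rho [Hrho Hs]]. exists rho. split; auto. intro K.
  set (e := expo (den w)).
  set (b := fun k => Rabs (coef w (K + k)%nat) * Rpower rho (e (K + k)%nat)).
  assert (Hb : ex_series b) by (apply (ex_series_incr_n _ K) in Hs; exact Hs).
  set (q y := Rpower y (e K) / Rpower rho (e K)).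
  exists (Series b / Rpower rho (e K)). split.
  { apply Rmult_le_pos; [|left; apply Rinv_0_lt_compat, Rpower_gt0].
    apply Series_ge0; auto. intro k.
    apply Rmult_le_pos; [apply Rabs_pos|left; apply Rpower_gt0]. }
  intros y Hy.
  pose proof (ex_series_Rabs_term w rho y Hs Hy) as Habs.
  unfold eval. fold (term w y).
  rewrite (Series_split_psum _ K (ex_series_Rabs _ Habs)).
  replace (_ + _ - _) with (Series (fun k => term w y (K + k)%nat)) by ring.
  apply (ex_series_incr_n _ K) in Habs.
  eapply Rle_trans; [apply Series_Rabs, Habs|].
  replace (_ * _) with (Series (fun k => b k * q y)).
  2:{ rewrite Series_scal_r. unfold q. field. apply Rgt_not_eq, Rpower_gt0. }
  apply Series_le; [|apply ex_series_scal_r, Hb].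
  intro k. split; [apply Rabs_pos|].
  unfold term, b, q. fold e.
  rewrite Rabs_mult, (Rabs_pos_eq (Rpower y _)) by (left; apply Rpower_gt0).
  rewrite Rmult_assoc. apply Rmult_le_compat_l; [apply Rabs_pos|].
  apply (Rmult_le_reg_r (Rpower rho (e K))); [apply Rpower_gt0|].
  unfold Rdiv. rewrite !Rmult_assoc, Rinv_l, Rmult_1_r by apply Rgt_not_eq, Rpower_gt0.
  apply Rpower_scaled_le; [lra|]. apply expo_le. lia.
Qed.

Definition trunc (w : arc) (N J : nat) (y : R) : R :=
  psum (fun j => coef_at w (lat N (S j)) * Rpower y (lat N (S j))) J.

Lemma trunc_psum w Q N y J : (0 < Q)%nat -> N = (S (den w) * Q)%nat ->
  trunc w N J y = psum (term w y) (J / Q).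
Proof.
  intros HQ HN. induction J as [|J IH]; [now rewrite Nat.Div0.div_0_l|].
  unfold trunc in *. simpl psum. rewrite IH.
  pose proof (Nat.div_mod_eq J Q). pose proof (Nat.mod_upper_bound J Q ltac:(lia)).
  destruct (Nat.eq_dec (S (J mod Q)) Q) as [Et|Et].
  - assert (Hq : S (J / Q) = (S J / Q)%nat) by (apply (Nat.div_unique _ _ _ 0); lia).
    assert (E : lat N (S J) = expo (den w) (J / Q))
      by (rewrite (expo_lat _ Q N _ HQ HN); f_equal; lia).
    rewrite <- Hq. simpl. unfold term. now rewrite E, coef_at_expo.
  - assert (Hq : (J / Q = S J / Q)%nat) by (apply (Nat.div_unique _ _ _ (S (J mod Q))); lia).
    assert (Hm : (S J mod Q = S (J mod Q))%nat)
      by (symmetry; apply (Nat.mod_unique _ _ (J / Q)); lia).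
    rewrite <- Hq, (coef_at_lat_nonmultiple w Q N); auto; [ring|lia].
Qed.

Lemma trunc_sub_ord u v N j y : (0 < N)%nat -> ord_is u v (lat N (S j)) ->
  trunc u N (S j) y - trunc v N (S j) y
  = (coef_at u (lat N (S j)) - coef_at v (lat N (S j))) * Rpower y (lat N (S j)).
Proof.
  intros HN [_ Hbelow]. unfold trunc; simpl psum.
  rewrite (psum_ext _ (fun k => coef_at v (lat N (S k)) * Rpower y (lat N (S k))) j); [ring|].
  intros k Hk. f_equal.
  assert (coef_at u (lat N (S k)) - coef_at v (lat N (S k)) = 0) by (apply Hbelow, lat_lt; lia).
  lra.
Qed.

(* Both truncations stop at the order [r] of [u - v]; the remainders are of
   higher order, and the truncated parts cancel below [r]. *)
Lemma eval_sub_lead u v r : ord_is u v r -> exists e rho M, r < e /\ 0 < rho /\ 0 <= M /\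
  forall y, 0 < y < rho ->
  Rabs (eval u y - eval v y - (coef_at u r - coef_at v r) * Rpower y r) <= M * Rpower y e.
Proof.
  intros Hord.
  destruct (coef_at_diff_lat u v r (proj1 Hord)) as [[|j] [Hj Hr]]; [lia|].
  set (n := den u) in *. set (m := den v) in *. set (N := (S n * S m)%nat) in *.
  destruct (eval_sub_psum_bound u) as [ru [Hru Tu]].
  destruct (Tu (S j / S m)%nat) as [Mu [HMu Bu]].
  destruct (eval_sub_psum_bound v) as [rv [Hrv Tv]].
  destruct (Tv (S j / S n)%nat) as [Mv [HMv Bv]].
  set (eu := expo n (S j / S m)) in *. set (ev := expo m (S j / S n)) in *.
  assert (Heu : r < eu) by (rewrite Hr; apply lat_lt_expo_div; lia).
  assert (Hev : r < ev) by (rewrite Hr; unfold N; rewrite Nat.mul_comm; apply lat_lt_expo_div; lia).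
  exists (Rmin eu ev), (Rmin 1 (Rmin ru rv)), (Mu + Mv).
  split; [now apply Rmin_glb_lt|]. split; [repeat apply Rmin_pos; lra|]. split; [lra|].
  intros y Hy.
  pose proof (Rmin_l 1 (Rmin ru rv)). pose proof (Rmin_r 1 (Rmin ru rv)).
  pose proof (Rmin_l ru rv). pose proof (Rmin_r ru rv).
  specialize (Bu y ltac:(lra)). specialize (Bv y ltac:(lra)). fold n eu in Bu. fold m ev in Bv.
  rewrite <- (trunc_psum u (S m) N y (S j)) in Bu by (unfold N, n; lia).
  rewrite <- (trunc_psum v (S n) N y (S j)) in Bv by (unfold N, m; lia).
  assert (HN : (0 < N)%nat) by (unfold N; lia).
  rewrite Hr in Hord |- *. rewrite <- (trunc_sub_ord u v N j y HN Hord).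
  pose proof (Rle_Rpower_le1 y (Rmin eu ev) eu ltac:(lra) (Rmin_l eu ev)) as Pu.
  pose proof (Rle_Rpower_le1 y (Rmin eu ev) ev ltac:(lra) (Rmin_r eu ev)) as Pv.
  replace (_ - _ - _) with ((eval u y - trunc u N (S j) y) - (eval v y - trunc v N (S j) y)) by ring.
  eapply Rle_trans; [apply Rabs_triang|]. rewrite Rabs_Ropp.
  pose proof (Rmult_le_compat_l Mu _ _ HMu Pu). pose proof (Rmult_le_compat_l Mv _ _ HMv Pv).
  lra.
Qed.

Lemma lead_coef_pos_of_arc_lt u v r : ord_is u v r -> arc_lt v u ->
  0 < coef_at u r - coef_at v r.
Proof.
  intros Hord [eps [Heps Hlt]].
  set (D := coef_at u r - coef_at v r).
  assert (HD : D <> 0) by apply Hord.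
  destruct (Rlt_or_le 0 D) as [|HD0]; auto. exfalso.
  assert (HDneg : D < 0) by (destruct HD0; [auto|contradiction]).
  destruct (eval_sub_lead u v r Hord) as [e [rho [M [Hre [Hrho [HM Hlead]]]]]].
  destruct (Rpower_small (e - r) M (- D) ltac:(lra) HM ltac:(lra)) as [d [Hd Hsmall]].
  set (y := Rmin eps (Rmin rho d) / 2).
  pose proof (Rmin_l eps (Rmin rho d)). pose proof (Rmin_r eps (Rmin rho d)).
  pose proof (Rmin_l rho d). pose proof (Rmin_r rho d).
  assert (0 < Rmin eps (Rmin rho d)) by (repeat apply Rmin_pos; lra).
  assert (Hy : 0 < y) by (unfold y; lra).
  assert (Hy' : y < Rmin eps (Rmin rho d)) by (unfold y; lra).
  specialize (Hlt y ltac:(lra)). specialize (Hlead y ltac:(lra)).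
  specialize (Hsmall y ltac:(lra)).
  replace e with (r + (e - r)) in Hlead by ring. rewrite Rpower_plus in Hlead.
  apply Rabs_le_between in Hlead. fold D in Hlead.
  pose proof (Rpower_gt0 y r) as Hyr.
  pose proof (Rmult_lt_compat_l _ _ _ Hyr Hsmall).
  lra.
Qed.

(* If [x] were closer to [a] than [c] is, [a] and [c] would agree up to the
   order [r] of [x - a], so [x] would lie on the same side of both. *)
Lemma dist_between_l a x c : arc_lt a x -> arc_lt x c ->
  Defs.dist a x <= Defs.dist a c.
Proof.
  intros Hax Hxc.
  destruct (classic (exists r, ord_is a x r)) as [[r Hr]|Hr];
    [|rewrite dist_no_ord by exact Hr; apply dist_ge0].
  destruct (Rle_or_lt (Defs.dist a x) (Defs.dist a c)) as [|Hlt]; auto. exfalso.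
  rewrite (dist_ord _ _ _ Hr) in Hlt. pose proof (ord_is_gt0 _ _ _ Hr) as Hr0.
  assert (Hac : forall s, s <= r -> coef_at a s = coef_at c s)
    by (intros s Hs; exact (coef_at_eq_of_dist_lt a c r s Hr0 Hlt Hs)).
  assert (Hcx : ord_is c x r).
  { destruct Hr as [Hnz Hbelow]. split.
    - rewrite <- (Hac r) by lra. exact Hnz.
    - intros s Hs. rewrite <- (Hac s) by lra. exact (Hbelow s Hs). }
  pose proof (lead_coef_pos_of_arc_lt x a r (ord_is_sym _ _ _ Hr) Hax).
  pose proof (lead_coef_pos_of_arc_lt c x r Hcx Hxc).
  pose proof (Hac r (Rle_refl r)). lra.
Qed.

Lemma dist_between_r a x c : arc_lt c x -> arc_lt x a ->
  Defs.dist a x <= Defs.dist a c.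
Proof.
  intros Hcx Hxa. pose proof (dist_between_l c x a Hcx Hxa) as Hc.
  rewrite (dist_sym c a) in Hc.
  eapply Rle_trans; [apply (dist_ultra a c x)|]. now apply Rmax_lub; [right|].
Qed.

Lemma dist_le_of_ball S a w : (forall x, S x -> Defs.dist a x <= w) ->
  forall x y, S x -> S y -> Defs.dist x y <= w.
Proof.
  intros Hball x y Hx Hy. eapply Rle_trans; [apply (dist_ultra x a y)|].
  rewrite dist_sym. apply Rmax_lub; auto.
Qed.

Lemma dist_le_width S w x y : width S = Finite w -> S x -> S y -> Defs.dist x y <= w.
Proof.
  intros W Hx Hy.
  destruct (Lub_Rbar_correct (fun d => exists a b, S a /\ S b /\ d = Defs.dist a b)) as [U _].
  unfold width in W. rewrite W in U. apply U. exists x, y. auto.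
Qed.

Lemma closed_zone_of_max S p q : S p -> S q ->
  (forall x y, S x -> S y -> Defs.dist x y <= Defs.dist p q) -> closed_zone S.
Proof.
  intros Hp Hq Hmax. exists p, q. do 2 (split; auto).
  apply is_lub_Rbar_unique. split.
  - intros d [x [y [Hx [Hy ->]]]]. now apply Hmax.
  - intros b Hb. apply Hb. exists p, q. auto.
Qed.

Theorem lemma5p6 (A B C : arc -> Prop) :
  saturated A -> saturated B -> saturated C ->
  zone A -> zone B -> zone C ->
  adjacent A B -> adjacent B C ->
  (exists b, B b) ->
  (between A B C \/ between C B A) ->
  closed_zone A -> closed_zone C ->
  closed_zone (fun g => A g \/ B g \/ C g).
Proof.
  intros _ _ _ _ _ _ _ _ _ Hbet [a1 [a2 [Ha1 [Ha2 WA]]]] [c1 [c2 [Hc1 [Hc2 WC]]]].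
  set (U g := A g \/ B g \/ C g).
  set (W := Rmax (Defs.dist a1 a2) (Rmax (Defs.dist c1 c2) (Defs.dist a1 c1))).
  assert (HAC : Defs.dist a1 c1 <= W) by (apply Rmax_Rle; right; apply Rmax_Rle; now right).
  assert (Hball : forall x, U x -> Defs.dist a1 x <= W).
  { intros x [Hx|[Hx|Hx]].
    - apply Rmax_Rle; left. exact (dist_le_width A _ a1 x WA Ha1 Hx).
    - eapply Rle_trans; [|exact HAC].
      destruct Hbet as [Hb|Hb].
      + destruct (Hb a1 x c1 Ha1 Hx Hc1). now apply dist_between_l.
      + destruct (Hb c1 x a1 Hc1 Hx Ha1). now apply dist_between_r.
    - eapply Rle_trans; [apply (dist_ultra a1 c1 x)|]. apply Rmax_lub; [exact HAC|].
      apply Rmax_Rle; right; apply Rmax_Rle; left. exact (dist_le_width C _ c1 x WC Hc1 Hx). }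
  set (attained w := exists p q, U p /\ U q /\ w = Defs.dist p q).
  assert (Hattained : attained W).
  { apply Rmax_case; [|apply Rmax_case]; [exists a1, a2 | exists c1, c2 | exists a1, c1];
      unfold U; auto. }
  destruct Hattained as [p [q [Hp [Hq HW]]]].
  apply (closed_zone_of_max U p q Hp Hq). rewrite <- HW.
  exact (dist_le_of_ball U a1 W Hball).
Qed.
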